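(* There is an absolute constant $c>0$ such that for every sufficiently small $\varepsilon>0$ the following holds in the modified instance described in the context: there exists a clustering $\mathcal C^*_1$ of $V$ with cost at most $(1+c\varepsilon)\,\mathrm{opt}$ that does not split any atom of $\mathcal K$ and such that for every $u\in V$ and every $C\in\mathcal C^*_1$ with $K_u\subsetneq C$, we have $w(u,C)>\frac{|C|}{2}+\varepsilon\, w_u$.
   Context: A Correlation Clustering instance consists of a finite vertex set $V$ and a partition $E^+\uplus E^-=\binom V2$ of unordered pairs of distinct vertices into $+$edges and $-$edges; the cost of a clustering (partition) is the number of $+$edges between different parts plus the number of $-$edges inside parts. Every vertex has a $+$ self-loop by convention, so the set $N^+_u$ of $+$neighbours contains $u$. Let $\mathcal C$ be a clustering with cost at most $3$ times optimum. The atoms: with $\beta=0.1$, for every non-singleton $C\in\mathcal C$ mark every $u\in C$ with $|N^+_u\triangle C|>\frac\beta2|C|$ ($\triangle$ = symmetric difference), and if at least $\frac{\beta|C|}3$ vertices of $C$ are marked, mark all of $C$; $\mathcal K$ is obtained from $\mathcal C$ by making every marked vertex a singleton. Modified instance: every pair of distinct vertices lying in a common atom is relabelled as a $+$edge; below, costs and $\mathrm{opt}$ (the minimum cost) refer to this modified instance. For $u\in V$, $K_u$ is the atom containing $u$ and $k_u=|K_u|$. For $u,v\in V$ (possibly equal), $w_{uv}=\frac1{k_uk_v}\sum_{u'\in K_u,v'\in K_v}\mathbf 1[u'v'\text{ is a }+\text{edge or }u'=v']$; for $V'\subseteq V$, $w(u,V')=\sum_{v\in V'}w_{uv}$, and $w_u=w(u,V)$.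 *)

From HB Require Import structures.
From mathcomp Require Import all_boot all_order all_algebra.
From Stdlib Require Rdefinitions.
From mathcomp Require Import Rstruct.
Notation R := Rdefinitions.R.
Local Open Scope ring_scope.
Set Implicit Arguments. Unset Strict Implicit. Unset Printing Implicit Defensive.
Import Order.TTheory GRing.Theory Num.Theory.

Section CC.
Variable V : finType.

Definition clustering (P : {set {set V}}) : bool := partition P [set: V].

(* Cost of clustering P for the instance whose +edges are the pairs {u,v}, u<>v, with plus u v
   (plus assumed symmetric).  We count ordered pairs (u,v), u<>v, that are "bad"
   (+edge across parts, or -edge inside a part) and halve, i.e. count unordered pairs. *)
Definition cc_cost (plus : rel V) (P : {set {set V}}) : nat :=
  #|[set p : V * V | (p.1 != p.2) &&
      (plus p.1 p.2 (+) (pblock P p.1 == pblock P p.2))]| %/ 2.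

(* Optimum cost: minimum over all clusterings (the default value [set setT] is itself a
   clustering whenever V is nonempty; if V is empty every cost is 0). *)
Definition cc_opt (plus : rel V) : nat :=
  \big[minn/cc_cost plus [set [set: V]]]_(Q : {set {set V}} | clustering Q) cc_cost plus Q.

Definition Nplus (plus : rel V) (u : V) : {set V} := [set v | (v == u) || plus u v].

Definition symdiff (A B : {set V}) : {set V} := (A :\: B) :|: (B :\: A).

Definition beta : R := 1 / 10.

Definition marked_ind (plus : rel V) (C : {set V}) (u : V) : bool :=
  (u \in C) && (beta / 2 * (#|C|%:R : R) < (#|symdiff (Nplus plus u) C|%:R : R)).

Definition fully_marked (plus : rel V) (C : {set V}) : bool :=
  beta * (#|C|%:R : R) / 3 <= (#|[set u in C | marked_ind plus C u]|%:R : R).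

Definition marked (plus : rel V) (P : {set {set V}}) : {set V} :=
  [set u | [exists C in P, (1 < #|C|)%N && (u \in C) &&
                            (marked_ind plus C u || fully_marked plus C)]].

Definition atoms (plus : rel V) (P : {set {set V}}) : {set {set V}} :=
  [set [set u] | u in marked plus P] :|:
  ([set C :\: marked plus P | C in P] :\ set0).

Definition mod_plus (plus : rel V) (K : {set {set V}}) : rel V :=
  fun u v => plus u v || [exists A in K, (u \in A) && (v \in A)].

Definition wuv (plusK : rel V) (K : {set {set V}}) (u v : V) : R :=
  ((#|pblock K u|%:R * #|pblock K v|%:R)^-1) *
  \sum_(u' in pblock K u) \sum_(v' in pblock K v)
      (if plusK u' v' || (u' == v') then 1 else 0).

Definition wset (plusK : rel V) (K : {set {set V}}) (u : V) (S : {set V}) : R :=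
  \sum_(v in S) wuv plusK K u v.

Definition wtot (plusK : rel V) (K : {set {set V}}) (u : V) : R :=
  wset plusK K u [set: V].

End CC.

From HB Require Import structures.
From mathcomp Require Import all_boot all_order all_algebra.
From Stdlib Require Rdefinitions.
From mathcomp Require Import Rstruct.
From mathcomp Require Import zify ring lra.
Import Order.TTheory GRing.Theory Num.Theory.
Set Implicit Arguments. Unset Strict Implicit. Unset Printing Implicit Defensive.

(* Fix an optimal clustering Q of the modified instance. Atoms are cliques there, and
   the marking rule (beta = 1/10) makes them uniform: two vertices of an atom A disagree
   on fewer than |A|/2 vertices outside A. Averaging the cost over the |A| clusterings
   that move A into the Q-cluster of one of its vertices then shows that Q splits no
   atom.
   Starting from Q, repeatedly pull out as a cluster of its own any atom K_u that is a
   proper part of its current cluster C but has w(u,C) <= |C|/2 + eps w_u. Such a pull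
   separates at most as many + pairs as it frees - pairs, up to 2 eps |K_u| w_u, so the
   extra cost stays below 4 eps times the degree of the pulled vertices, itself at most
   twice the cost of Q when eps <= 1/8. The process ends at a clustering with the
   required property and cost at most (1 + 8 eps) opt. *)

(* Identities between pair counts are proved pair by pair; pointwise they are
   propositional tautologies in the membership tests, given a few implications
   between these tests. *)
Ltac truth_table :=
  intros; repeat match goal with b : bool |- _ => destruct b end; simpl in *;
  repeat match goal with H : is_true true -> _ |- _ => specialize (H isT) end;
  try discriminate; done.

Section Partitions.
Variable V : finType.
Implicit Types (P : {set {set V}}) (x y z : V).

Definition same_block P x y := pblock P x == pblock P y.

Lemma same_block_refl P x : same_block P x x.
Proof. exact: eqxx. Qed.

Lemma same_block_sym P x y : same_block P x y = same_block P y x.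
Proof. exact: eq_sym. Qed.

Lemma same_block_trans P x y z :
  same_block P x y -> same_block P y z = same_block P x z.
Proof. by rewrite /same_block => /eqP ->. Qed.

Lemma imset_block_partition (f : V -> {set V}) :
  (forall x, x \in f x) -> (forall x y, y \in f x -> f y = f x) ->
  partition [set f x | x in V] [set: V] /\
  forall x, pblock [set f x | x in V] x = f x.
Proof.
move=> f_refl f_eq.
have triv : trivIset [set f x | x in V].
  apply/trivIsetP => _ _ /imsetP[a _ ->] /imsetP[b _ ->] neq_ab.
  apply/pred0P => z /=; apply/negbTE/negP => /andP[za zb].
  by move: neq_ab; rewrite -(f_eq _ _ za) (f_eq _ _ zb) eqxx.
split=> [|x]; last by apply: def_pblock => //; apply: imset_f.
apply/and3P; split=> //.
- apply/eqP/setP => x; rewrite inE; apply/bigcupP; exists (f x) => //.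
  exact: imset_f.
- by apply/imsetP => -[x _ f0]; move: (f_refl x); rewrite -f0 inE.
Qed.

Definition label_partition (T : eqType) (lab : V -> T) : {set {set V}} :=
  [set [set y | lab y == lab x] | x in V].

Lemma label_partitionP (T : eqType) (lab : V -> T) :
  partition (label_partition lab) [set: V] /\
  forall x, pblock (label_partition lab) x = [set y | lab y == lab x].
Proof.
apply: imset_block_partition => [x|x y]; first by rewrite inE.
by rewrite inE => /eqP lab_yx; apply/setP => z; rewrite !inE lab_yx.
Qed.

Lemma same_block_label (T : eqType) (lab : V -> T) x y :
  same_block (label_partition lab) x y = (lab x == lab y).
Proof.
rewrite /same_block !(label_partitionP lab).2.
apply/eqP/eqP => [E|->] //.
have : y \in [set z | lab z == lab y] by rewrite inE.
by rewrite -E inE => /eqP.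
Qed.

Definition block_closed P (S : {set V}) :=
  forall x y, x \in S -> same_block P x y -> y \in S.

Section Partition.
Variable P : {set {set V}}.
Hypothesis P_part : partition P [set: V].

Lemma mem_pblock_self x : x \in pblock P x.
Proof. by rewrite mem_pblock (cover_partition P_part) inE. Qed.

Lemma pblock_in_partition x : pblock P x \in P.
Proof. by apply: pblock_mem; rewrite (cover_partition P_part) inE. Qed.

Lemma same_blockE x y : same_block P x y = (y \in pblock P x).
Proof.
by rewrite /same_block eq_pblock ?(cover_partition P_part) ?inE //; case/and3P: P_part.
Qed.

Lemma same_block_in x y z : y \in pblock P x -> z \in pblock P x -> same_block P y z.
Proof.
case/and3P: P_part => _ triv _ yx zx.
by rewrite /same_block (same_pblock triv yx) (same_pblock triv zx).
Qed.

End Partition.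
End Partitions.

Section PairSums.
Variable V : finType.
Implicit Types (F G : V -> V -> nat) (A B : {set V}).

Lemma sum2D F G :
  \sum_x \sum_y F x y + \sum_x \sum_y G x y = \sum_x \sum_y (F x y + G x y).
Proof. by rewrite -big_split; apply: eq_bigr => x _; rewrite big_split. Qed.

Lemma eq_sum2 F G : (forall x y, F x y = G x y) ->
  \sum_x \sum_y F x y = \sum_x \sum_y G x y.
Proof. by move=> FG; apply: eq_bigr => x _; apply: eq_bigr. Qed.

Lemma leq_sum2 F G : (forall x y, F x y <= G x y) ->
  \sum_x \sum_y F x y <= \sum_x \sum_y G x y.
Proof. by move=> FG; apply: leq_sum => x _; apply: leq_sum. Qed.

Lemma sum_nat_of_bool (f : pred V) : \sum_y f y = #|[set y | f y]|.
Proof.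
by rewrite -sum1dep_card [RHS]big_mkcond; apply: eq_bigr => y _ /=; case: (f y).
Qed.

Lemma sum2_transpose (f g : rel V) : (forall x y, f x y = g y x) ->
  \sum_x \sum_y f x y = \sum_x \sum_y g x y.
Proof. by move=> fg; rewrite exchange_big; apply: eq_sum2 => x y; rewrite fg. Qed.

Lemma sum2_meml A (f : rel V) :
  \sum_x \sum_y ((x \in A) && f x y) = \sum_(x in A) \sum_y f x y.
Proof.
by rewrite [RHS]big_mkcond; apply: eq_bigr => x _; case: (x \in A) => //=; rewrite big1.
Qed.

Lemma sum2_setU A B (f : rel V) : [disjoint A & B] ->
  \sum_x \sum_y ((x \in A :|: B) && f x y)
  = \sum_x \sum_y ((x \in A) && f x y) + \sum_x \sum_y ((x \in B) && f x y).
Proof.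
move=> disjAB; rewrite sum2D; apply: eq_sum2 => x y; rewrite in_setU.
by case xA: (x \in A) => //; rewrite (disjointFr disjAB xA) addn0.
Qed.

Lemma sum2_mem A B (f : rel V) :
  \sum_(x in A) \sum_(y in B) f x y = \sum_x \sum_y [&& x \in A, y \in B & f x y].
Proof.
rewrite big_mkcond; apply: eq_bigr => x _; case: (x \in A) => /=; last by rewrite big1.
by rewrite big_mkcond; apply: eq_bigr => y _; case: (y \in B).
Qed.

Lemma sum2_mem_card A B : \sum_x \sum_y ((x \in A) && (y \in B)) = #|A| * #|B|.
Proof.
have cardE (C : {set V}) : \sum_x (x \in C) = #|C|.
  by rewrite sum_nat_of_bool; apply: eq_card => x; rewrite inE.
rewrite -!cardE big_distrl; apply: eq_bigr => x _; rewrite big_distrr.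
by apply: eq_bigr => y _ /=; case: (x \in A); case: (y \in B).
Qed.

Lemma card_pairs (f : rel V) :
  #|[set pr : V * V | f pr.1 pr.2]| = \sum_x \sum_y f x y.
Proof.
rewrite -sum1dep_card pair_big /= big_mkcond /=.
by apply: eq_bigr => -[x y] _ /=; case: (f x y).
Qed.

Lemma sum2_sym_irrefl_even (f : rel V) : symmetric f -> irreflexive f ->
  ~~ odd (\sum_x \sum_y f x y).
Proof.
move=> f_sym f_irr.
pose half := \sum_x \sum_y ((enum_rank x < enum_rank y) && f x y).
have split_xy x y : f x y = (enum_rank x < enum_rank y) && f x y
                           + (enum_rank y < enum_rank x) && f y x :> nat.
  case: (ltngtP (enum_rank x) (enum_rank y)) => [||/ord_inj/enum_rank_inj->] /=.
  - by rewrite addn0.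
  - by rewrite f_sym.
  - by rewrite f_irr.
rewrite (eq_sum2 split_xy) -sum2D [X in half + X]exchange_big /= addnn.
by rewrite odd_double.
Qed.

End PairSums.

Section PairCost.
Variables (V : finType) (p : rel V).
Hypothesis p_sym : symmetric p.

Definition disagree (s : rel V) x y := (x != y) && (p x y (+) s x y).

Definition pair_cost (s : rel V) : nat := \sum_x \sum_y disagree s x y.

Lemma cc_cost_pair_cost P : (cc_cost p P).*2 = pair_cost (same_block P).
Proof.
rewrite /cc_cost (card_pairs (disagree (same_block P))) divn2 even_halfK //.
apply: sum2_sym_irrefl_even => [x y|x]; last by rewrite /disagree eqxx.
by rewrite /disagree eq_sym p_sym same_block_sym.
Qed.

Lemma exists_optimal_clustering : exists2 Q, clustering Q &
  forall Q', clustering Q' -> pair_cost (same_block Q) <= pair_cost (same_block Q').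
Proof.
have [part_tt _] := label_partitionP (fun _ : V => tt).
by case: (@arg_minnP _ _ (@clustering V) (fun Q => pair_cost (same_block Q)) part_tt)
  => Q; exists Q.
Qed.

Lemma cc_opt_optimal Q : clustering Q ->
  (forall Q', clustering Q' -> pair_cost (same_block Q) <= pair_cost (same_block Q')) ->
  cc_opt p = cc_cost p Q.
Proof.
move=> Q_part Q_opt.
have Q_min Q' : clustering Q' -> cc_cost p Q <= cc_cost p Q'.
  by move=> Q'_part; rewrite -leq_double !cc_cost_pair_cost Q_opt.
apply/eqP; rewrite eqn_leq /cc_opt -minEnat -!leEnat; apply/andP; split.
  exact: bigmin_le_cond.
apply/bigmin_geP; split=> [|Q' /Q_min]; rewrite leEnat //.
case: (pickP (fun _ : V => true)) => [x _|V0].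
  apply: Q_min; apply/and3P; split; first by rewrite cover1.
    by apply/trivIsetP => A B; rewrite !inE => /eqP-> /eqP->; rewrite eqxx.
  by rewrite inE eq_sym; apply/set0Pn; exists x.
suff -> : cc_cost p Q = 0 by [].
rewrite /cc_cost (_ : [set _ | _] = set0) ?cards0 //.
by apply/setP => pr; move: (V0 pr.1).
Qed.

End PairCost.

Section OptimalNoSplit.
Variables (V : finType) (p : rel V).
Hypothesis p_sym : symmetric p.
Variable K : {set {set V}}.
Hypothesis K_part : partition K [set: V].
Hypothesis K_clique : forall x y, same_block K x y -> x != y -> p x y.
Hypothesis K_uniform : forall x y, same_block K x y ->
  2 * #|[set z | (z \notin pblock K x) && (p x z != p y z)]| < #|pblock K x|.

(* move_label b moves the whole atom A into the Q-cluster of b. Averaged over b in A,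
   this beats Q as soon as Q cuts A: all cut pairs inside A are repaired, while by
   uniformity each pair (x, b) cut by Q costs fewer than |A|/2 new disagreements of x
   outside A. *)
Section MoveAtom.
Variables (Q : {set {set V}}) (a : V).
Let A := pblock K a.
Local Notation sQ := (same_block Q).

Definition move_label b z := if z \in A then pblock Q b else pblock Q z.
Let move_cost b := pair_cost p (fun x y => move_label b x == move_label b y).
Let ext_cost x b := \sum_y ((y \notin A) && (p x y (+) sQ b y)).
Let ext_dist x b := \sum_y ((y \notin A) && (p x y != p b y)).
Let rest := \sum_x \sum_y [&& x \notin A, y \notin A & disagree p sQ x y].
Let cut := \sum_(x in A) \sum_(y in A) ~~ sQ x y.

Let in_atom x y : x \in A -> y \in A -> same_block K x y.
Proof. exact: same_block_in. Qed.

Let neq_in_out x y : x \in A -> y \notin A -> x != y.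
Proof. by move=> xA; apply: contraNneq => <-. Qed.

Let sum_out_in (f : rel V) : \sum_x \sum_y [&& x \notin A, y \in A & f y x]
  = \sum_(x in A) \sum_y ((y \notin A) && f x y).
Proof.
rewrite exchange_big -sum2_meml /=.
by apply: eq_sum2 => x y; case: (x \in A); case: (y \in A).
Qed.

Lemma move_cost_eq b : move_cost b = rest + 2 * \sum_(x in A) ext_cost x b.
Proof.
have pointwise x y : disagree p (fun x y => move_label b x == move_label b y) x y =
    [&& x \notin A, y \notin A & disagree p sQ x y]
  + [&& x \in A, y \notin A & p x y (+) sQ b y]
  + [&& x \notin A, y \in A & p y x (+) sQ b x] :> nat.
  rewrite /disagree /move_label (p_sym y x) (same_block_sym Q b x).
  case xA: (x \in A); case yA: (y \in A) => /=.
  - by rewrite eqxx addbT; case: eqVneq => //= /K_clique-> //; apply: in_atom.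
  - by rewrite neq_in_out ?yA // addn0.
  - by rewrite eq_sym neq_in_out ?xA.
  - by rewrite !addn0.
rewrite /move_cost /pair_cost (eq_sum2 pointwise) -!sum2D -/rest -addnA.
by rewrite sum_out_in sum2_meml mul2n addnn.
Qed.

Lemma pair_cost_split : pair_cost p sQ = rest + cut + 2 * \sum_(x in A) ext_cost x x.
Proof.
have pointwise x y : disagree p sQ x y =
    [&& x \notin A, y \notin A & disagree p sQ x y]
  + [&& x \in A, y \in A & ~~ sQ x y]
  + [&& x \in A, y \notin A & p x y (+) sQ x y]
  + [&& x \notin A, y \in A & p y x (+) sQ y x] :> nat.
  rewrite /disagree (p_sym y x) (same_block_sym Q y x).
  case xA: (x \in A); case yA: (y \in A) => /=.
  - case: eqVneq => [->|neq_xy] /=; first by rewrite same_block_refl.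
    by rewrite K_clique ?addn0 ?(in_atom xA yA).
  - by rewrite neq_in_out ?yA // addn0.
  - by rewrite eq_sym neq_in_out ?xA.
  - by rewrite !addn0.
rewrite /pair_cost (eq_sum2 pointwise) -!sum2D -/rest -!addnA; congr (_ + (_ + _)).
  by rewrite /cut sum2_mem.
by rewrite sum_out_in sum2_meml mul2n addnn.
Qed.

Lemma ext_cost_le x b : x \in A -> b \in A ->
  ext_cost x b <= sQ x b * ext_cost x x + ~~ sQ x b * (ext_cost b b + ext_dist x b).
Proof.
move=> xA bA; case sQxb: (sQ x b); rewrite ?mul1n ?mul0n ?addn0 ?add0n.
  by apply/eq_leq/eq_bigr => y _; rewrite (same_block_trans y sQxb).
rewrite -big_split /=; apply: leq_sum => y _.
by case: (y \notin A); case: (p x y); case: (p b y); case: (sQ b y).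
Qed.

Lemma sum_ext_cost_le : \sum_(b in A) \sum_(x in A) ext_cost x b <=
  #|A| * \sum_(x in A) ext_cost x x + \sum_(b in A) \sum_(x in A) ~~ sQ x b * ext_dist x b.
Proof.
apply: leq_trans (_ : _ <= \sum_(b in A) \sum_(x in A)
  (sQ x b * ext_cost x x + ~~ sQ x b * (ext_cost b b + ext_dist x b))) _.
  by apply: leq_sum => b bA; apply: leq_sum => x xA; apply: ext_cost_le.
have collect : \sum_(b in A) \sum_(x in A)
    (sQ x b * ext_cost x x + ~~ sQ x b * ext_cost b b) = #|A| * \sum_(x in A) ext_cost x x.
  under eq_bigr do rewrite big_split /=.
  rewrite big_split /= exchange_big -big_split big_distrr /=; apply: eq_bigr => b _.
  rewrite -big_split -sum_nat_const /=; apply: eq_bigr => x _.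
  by rewrite (same_block_sym Q b x); case: (sQ x b); rewrite ?mul1n ?mul0n ?addn0.
under eq_bigr do under eq_bigr do rewrite mulnDr addnA.
by under eq_bigr do rewrite big_split /=; rewrite big_split /= collect.
Qed.

Lemma sum_ext_dist_le :
  2 * \sum_(b in A) \sum_(x in A) ~~ sQ x b * ext_dist x b <= (#|A| - 1) * cut.
Proof.
rewrite /cut exchange_big !big_distrr /=; apply: leq_sum => x xA.
rewrite !big_distrr /=; apply: leq_sum => b bA.
have := K_uniform (in_atom xA bA).
rewrite (same_pblock (partition_trivIset K_part) xA) -/A => dist_lt.
by rewrite /ext_dist sum_nat_of_bool; case: (~~ sQ x b) => /=; lia.
Qed.

Lemma sum_move_cost_lt : 0 < cut -> \sum_(b in A) move_cost b < #|A| * pair_cost p sQ.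
Proof.
move=> cut_gt0.
have A_gt0 : 0 < #|A| by apply/card_gt0P; exists a; apply: mem_pblock_self.
rewrite (eq_bigr _ (fun b _ => move_cost_eq b)) big_split sum_nat_const -big_distrr /=.
rewrite pair_cost_split; move: sum_ext_cost_le sum_ext_dist_le; nia.
Qed.

End MoveAtom.

Lemma optimal_no_split Q :
  (forall Q', clustering Q' -> pair_cost p (same_block Q) <= pair_cost p (same_block Q')) ->
  forall x y, same_block K x y -> same_block Q x y.
Proof.
move=> Q_opt x y sKxy; apply: contraT => split_xy.
set A := pblock K x; set cost_Q := pair_cost p (same_block Q).
pose move_cost b := pair_cost p (fun z t => move_label Q x b z == move_label Q x b t).
have yA : y \in A by rewrite -same_blockE.
have cut_gt0 : 0 < \sum_(z in A) \sum_(t in A) ~~ same_block Q z t.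
  by rewrite (bigD1 x) ?mem_pblock_self //= (bigD1 y) //= split_xy; lia.
have [b _ lt_b] : exists2 b, b \in A & move_cost b < cost_Q.
  apply/exists_inP; move: (sum_move_cost_lt cut_gt0); apply: contraLR.
  rewrite negb_exists_in -leqNgt => /forall_inP ge_b.
  by rewrite -sum_nat_const; apply: leq_sum => b /ge_b; rewrite -leqNgt.
have [lab_part _] := label_partitionP (move_label Q x b).
move: (Q_opt _ lab_part); rewrite leqNgt.
suff -> : pair_cost p (same_block (label_partition (move_label Q x b))) = move_cost b.
  by rewrite lt_b.
by apply: eq_sum2 => z t; rewrite /disagree same_block_label.
Qed.

End OptimalNoSplit.

Definition refl_clos (V : eqType) (p : rel V) : rel V := fun x y => p x y || (x == y).

Lemma refl_clos_sym (V : eqType) (p : rel V) : symmetric p -> symmetric (refl_clos p).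
Proof. by move=> p_sym x y; rewrite /refl_clos p_sym eq_sym. Qed.

Section Weights.
Variables (V : finType) (p : rel V) (K : {set {set V}}).
Hypothesis K_part : partition K [set: V].
Local Open Scope ring_scope.

Lemma card_pblock_neq0 v : (#|pblock K v|%:R : R) != 0.
Proof. by rewrite pnatr_eq0 -lt0n; apply/card_gt0P; exists v; apply: mem_pblock_self. Qed.

Lemma sum_block_average (H : V -> R) (S : {set V}) : block_closed K S ->
  \sum_(v in S) (#|pblock K v|%:R^-1 * \sum_(v' in pblock K v) H v') = \sum_(v' in S) H v'.
Proof.
move=> S_closed; under eq_bigr do rewrite mulr_sumr.
rewrite (exchange_big_dep (mem S)) /= => [|v v' vS]; last first.
  by rewrite -same_blockE //; apply: S_closed.
apply: eq_bigr => v' v'S.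
rewrite (eq_bigl (mem (pblock K v'))) => [|v] /=; last first.
  by rewrite -!same_blockE // same_block_sym andb_idl // => /(S_closed _ _ v'S).
rewrite (eq_bigr (fun _ => #|pblock K v'|%:R^-1 * H v')) => [|v]; last first.
  by rewrite -same_blockE // => /eqP->.
rewrite sumr_const -(mulr_natr (_ * H v')) mulrAC mulVf ?mul1r //.
exact: card_pblock_neq0.
Qed.

Lemma wset_mul_card u (S : {set V}) : block_closed K S ->
  wset p K u S * #|pblock K u|%:R =
  (\sum_(x in pblock K u) \sum_(y in S) refl_clos p x y)%:R.
Proof.
move=> S_closed; rewrite /wset /wuv mulr_suml.
rewrite (eq_bigr (fun v => #|pblock K v|%:R^-1 * \sum_(v' in pblock K v)
    \sum_(u' in pblock K u) (if p u' v' || (u' == v') then 1 else 0 : R))); last first.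
  move=> v _; rewrite [in RHS]exchange_big /=.
  by field; rewrite !card_pblock_neq0.
rewrite sum_block_average // natr_sum exchange_big /=; apply: eq_bigr => y _.
by rewrite natr_sum; apply: eq_bigr => x _; rewrite /refl_clos; case: (_ || _).
Qed.

End Weights.

Section PullAtoms.
Variables (V : finType) (p : rel V).
Hypothesis p_sym : symmetric p.
Variable K : {set {set V}}.
Hypothesis K_part : partition K [set: V].
Hypothesis K_clique : forall x y, same_block K x y -> x != y -> p x y.
Variable Q : {set {set V}}.
Hypothesis Q_coarser : forall x y, same_block K x y -> same_block Q x y.

Local Notation sK := (same_block K).
Local Notation sQ := (same_block Q).
Local Notation e := (refl_clos p).

(* X is the set of pulled-out vertices: each atom inside X is a cluster of its own,
   and the rest of each Q-cluster stays together. *)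
Definition pull_label (X : {set V}) x : {set V} + {set V} :=
  if x \in X then inl (pblock K x) else inr (pblock Q x).

Definition pull_block (X : {set V}) u := [set y | pull_label X y == pull_label X u].

Lemma pull_label_eq X x y : (pull_label X x == pull_label X y) =
  if x \in X then (y \in X) && sK x y else (y \notin X) && sQ x y.
Proof. by rewrite /pull_label; case: (x \in X); case: (y \in X). Qed.

Lemma pull_label_same_block X x y : block_closed K X -> sK x y ->
  pull_label X x = pull_label X y.
Proof.
move=> X_closed sKxy; apply/eqP; rewrite pull_label_eq sKxy Q_coarser // !andbT.
case xX: (x \in X); first exact: X_closed xX sKxy.
by apply/negP => /X_closed yX; move: xX; rewrite yX // same_block_sym.
Qed.

Definition plus_deg (X : {set V}) := \sum_x \sum_y ((x \in X) && e x y).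
Definition plus_cut (X : {set V}) := \sum_x \sum_y ((x \in X) && (~~ sQ x y && e x y)).
Definition plus_leaving (X : {set V}) :=
  \sum_x \sum_y [&& x \in X, y \notin X, sQ x y & e x y].
Definition minus_touching (X : {set V}) :=
  \sum_x \sum_y [&& (x \in X) || (y \in X), sQ x y & ~~ e x y].
Definition plus_separated (X : {set V}) :=
  \sum_x \sum_y [&& (x \in X) || (y \in X), sQ x y, ~~ sK x y & e x y].

Lemma pull_cost_eq X : block_closed K X ->
  pair_cost p (fun x y => pull_label X x == pull_label X y) + minus_touching X
  = pair_cost p sQ + plus_separated X.
Proof.
have pointwise (xX yX k q pp eq : bool) : (xX -> k -> yX) -> (yX -> k -> xX) ->
    (k -> q) -> (k -> ~~ eq -> pp) -> (eq -> k) ->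
    ~~ eq && (pp (+) (if xX then yX && k else ~~ yX && q)) + [&& xX || yX, q & ~~ (pp || eq)]
    = ~~ eq && (pp (+) q) + [&& xX || yX, q, ~~ k & pp || eq].
  by truth_table.
move=> X_closed; rewrite /pair_cost !sum2D; apply: eq_sum2 => x y.
rewrite /disagree pull_label_eq /refl_clos; apply: pointwise.
- exact: X_closed.
- by move=> yX; rewrite same_block_sym; apply: X_closed.
- exact: Q_coarser.
- exact: K_clique.
- by move/eqP->; apply: same_block_refl.
Qed.

Lemma minus_touching_plus_cut_le X : minus_touching X + plus_cut X <= pair_cost p sQ.
Proof.
have pointwise (xX yX q pp eq : bool) : (eq -> q) ->
    [&& xX || yX, q & ~~ (pp || eq)] + xX && (~~ q && (pp || eq)) <= ~~ eq && (pp (+) q).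
  by truth_table.
rewrite /pair_cost sum2D; apply: leq_sum2 => x y.
by rewrite /disagree /refl_clos; apply: pointwise => /eqP->; apply: same_block_refl.
Qed.

Variable eps : R.
Hypothesis eps_ge0 : (0 <= eps)%R.

(* By pull_cost_eq the first inequality bounds the extra cost of pulling out X, and by
   minus_touching_plus_cut_le the second one bounds plus_deg X by the cost of Q. *)
Definition pull_inv (X : {set V}) := [/\ block_closed K X,
  ((plus_separated X)%:R <= (minus_touching X)%:R + 4 * eps * (plus_deg X)%:R)%R &
  ((plus_deg X)%:R + (plus_leaving X)%:R
    <= (minus_touching X)%:R + 4 * eps * (plus_deg X)%:R + (plus_cut X)%:R)%R].

Definition weight_condition u (C : {set V}) :=
  (#|C|%:R / 2 + eps * wtot p K u < wset p K u C)%R.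

Definition bad_atom (X : {set V}) u := [&& u \notin X, pblock K u \proper pull_block X u
  & ~~ weight_condition u (pull_block X u)].

Section PullAtom.
Variables (X : {set V}) (u : V).
Hypothesis X_closed : block_closed K X.
Hypothesis uX : u \notin X.
Let A := pblock K u.
Let D := pull_block X u.

Let atom_notin_X x : x \in A -> x \notin X.
Proof.
rewrite -same_blockE // same_block_sym => sKxu.
by apply: contra uX => xX; apply: X_closed sKxu.
Qed.

Let disjoint_X_atom : [disjoint X & A].
Proof.
by rewrite disjoint_subset; apply/subsetP => x xX; rewrite inE (contraL (@atom_notin_X x)).
Qed.

Let refl_clos_atom x y : x \in A -> y \in A -> e x y.
Proof.
move=> xA yA; rewrite /refl_clos; case: eqVneq => [_|neq_xy]; first by rewrite orbT.
by rewrite K_clique // (same_block_in K_part xA yA).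
Qed.

Let mem_pull_block x y : x \in A -> (y \in D) = (y \notin X) && sQ x y.
Proof.
move=> xA; rewrite inE pull_label_eq (negbTE uX) /=.
have sQxu : sQ x u by rewrite Q_coarser // same_block_sym same_blockE.
by case: (y \in X) => //=; rewrite same_block_sym (same_block_trans y sQxu).
Qed.

Let pull_block_closed : block_closed K D.
Proof.
move=> x y; rewrite !inE => /eqP <- sKxy.
by rewrite (pull_label_same_block X_closed sKxy).
Qed.

Lemma pull_closed : block_closed K (X :|: A).
Proof.
move=> x y; rewrite !in_setU => /orP[xX|xA] sKxy; first by rewrite (X_closed xX sKxy).
have sKux : sK u x by rewrite same_blockE.
by rewrite -same_blockE // -(same_block_trans y sKux) sKxy orbT.
Qed.

Let plus_AD := \sum_x \sum_y [&& x \in A, y \in D & e x y].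
Let minus_AD := \sum_x \sum_y [&& x \in A, y \in D & ~~ e x y].
Let plus_AX := \sum_x \sum_y [&& x \in A, y \in X, sQ x y & e x y].

Lemma plus_deg_pull : plus_deg (X :|: A) = plus_deg X + plus_deg A.
Proof. exact: sum2_setU disjoint_X_atom. Qed.

Lemma plus_cut_pull : plus_cut (X :|: A) = plus_cut X + plus_cut A.
Proof. exact: sum2_setU disjoint_X_atom. Qed.

Lemma plus_separated_pull : plus_separated (X :|: A) <= plus_separated X + plus_AD + plus_AD.
Proof.
have pointwise (xX yX xA yA xD yD q k i : bool) :
    (xA -> yD = ~~ yX && q) -> (yA -> xD = ~~ xX && q) ->
    [&& (xX || xA) || (yX || yA), q, ~~ k & i]
      <= [&& xX || yX, q, ~~ k & i] + [&& xA, yD & i] + [&& yA, xD & i].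
  by truth_table.
rewrite {2}(_ : plus_AD = \sum_x \sum_y [&& y \in A, x \in D & e x y]); last first.
  by apply: sum2_transpose => x y; rewrite (refl_clos_sym p_sym).
rewrite /plus_separated !sum2D; apply: leq_sum2 => x y; rewrite !in_setU.
apply: pointwise => [|yA]; first exact: mem_pull_block.
by rewrite (mem_pull_block x yA) same_block_sym.
Qed.

Lemma minus_touching_pull :
  minus_touching X + minus_AD + minus_AD <= minus_touching (X :|: A).
Proof.
have pointwise (xX yX xA yA xD yD q i : bool) :
    (xA -> yD = ~~ yX && q) -> (yA -> xD = ~~ xX && q) ->
    (xA -> ~~ xX) -> (yA -> ~~ yX) -> (xA -> yA -> i) ->
    [&& xX || yX, q & ~~ i] + [&& xA, yD & ~~ i] + [&& yA, xD & ~~ i]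
      <= [&& (xX || xA) || (yX || yA), q & ~~ i].
  by truth_table.
rewrite {2}(_ : minus_AD = \sum_x \sum_y [&& y \in A, x \in D & ~~ e x y]); last first.
  by apply: sum2_transpose => x y; rewrite (refl_clos_sym p_sym).
rewrite /minus_touching !sum2D; apply: leq_sum2 => x y; rewrite !in_setU.
apply: pointwise; [exact: mem_pull_block | | exact: atom_notin_X | exact: atom_notin_X |].
  by move=> yA; rewrite (mem_pull_block x yA) same_block_sym.
exact: refl_clos_atom.
Qed.

Lemma plus_deg_atom : plus_deg A = plus_AD + plus_AX + plus_cut A.
Proof.
have pointwise (yX xA yD q i : bool) : (xA -> yD = ~~ yX && q) ->
    xA && i = [&& xA, yD & i] + [&& xA, yX, q & i] + xA && (~~ q && i) :> nat.
  by truth_table.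
rewrite /plus_deg /plus_cut !sum2D; apply: eq_sum2 => x y.
by apply: pointwise; apply: mem_pull_block.
Qed.

Lemma plus_leaving_pull : plus_leaving (X :|: A) + plus_AX <= plus_leaving X + plus_AD.
Proof.
have pointwise (xX yX xA yA yD q i : bool) :
    (xA -> yD = ~~ yX && q) -> (yA -> ~~ yX) -> (xA -> ~~ xX) ->
    [&& xX || xA, ~~ (yX || yA), q & i] + [&& xX, yA, q & i]
      <= [&& xX, ~~ yX, q & i] + [&& xA, yD & i].
  by truth_table.
rewrite (_ : plus_AX = \sum_x \sum_y [&& x \in X, y \in A, sQ x y & e x y]); last first.
  apply: sum2_transpose => x y.
  by rewrite (refl_clos_sym p_sym) same_block_sym; case: (x \in A); case: (y \in X).
rewrite /plus_leaving !sum2D; apply: leq_sum2 => x y; rewrite !in_setU.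
by apply: pointwise; [exact: mem_pull_block | exact: atom_notin_X | exact: atom_notin_X].
Qed.

Local Open Scope ring_scope.

Lemma plus_AD_le : ~~ weight_condition u D ->
  plus_AD%:R <= minus_AD%:R + 2 * eps * (plus_deg A)%:R.
Proof.
rewrite /weight_condition -leNgt => w_le.
have A_gt0 : (0 : R) < #|A|%:R.
  by rewrite ltr0n; apply/card_gt0P; exists u; apply: mem_pblock_self.
have wD : wset p K u D * #|A|%:R = plus_AD%:R.
  by rewrite (wset_mul_card p K_part u pull_block_closed) sum2_mem.
have wV : wtot p K u * #|A|%:R = (plus_deg A)%:R.
  rewrite /wtot wset_mul_card // sum2_mem; congr _%:R.
  by apply: eq_sum2 => x y; rewrite in_setT.
have cardAD : plus_AD%:R + minus_AD%:R = #|A|%:R * #|D|%:R :> R.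
  rewrite -natrD -natrM -sum2_mem_card sum2D; congr _%:R.
  by apply: eq_sum2 => x y; case: (x \in A); case: (y \in D); case: (e x y).
have := ler_wpM2r (ltW A_gt0) w_le.
rewrite (_ : (#|D|%:R / 2 + eps * wtot p K u) * #|A|%:R
           = #|A|%:R * #|D|%:R / 2 + eps * (wtot p K u * #|A|%:R)); last by ring.
by rewrite wD wV -cardAD; lra.
Qed.

Lemma pull_inv_step : pull_inv X -> ~~ weight_condition u D -> pull_inv (X :|: A).
Proof.
case=> _ sep_le deg_le /plus_AD_le AD_le.
move: plus_separated_pull minus_touching_pull plus_leaving_pull.
rewrite -!(ler_nat R) !natrD => sep_pull minus_pull leaving_pull.
have deg_ge0 : (0 : R) <= (plus_deg A)%:R by apply: ler0n.
split; first exact: pull_closed.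
  by rewrite plus_deg_pull natrD; nra.
by rewrite plus_deg_pull plus_cut_pull !natrD {1}plus_deg_atom !natrD; nra.
Qed.

End PullAtom.

Lemma pull_inv0 : pull_inv set0.
Proof.
have sum0 (f : rel V) : (forall x y, f x y = false) -> \sum_x \sum_y f x y = 0.
  by move=> f0; rewrite big1 // => x _; rewrite big1 // => y _; rewrite f0.
rewrite /pull_inv /plus_separated /minus_touching /plus_deg /plus_leaving /plus_cut.
rewrite !sum0 => [|x y|x y|x y|x y|x y]; rewrite ?inE //.
by split=> [x y|//|]; rewrite ?inE // !mulr0 !addr0.
Qed.

Lemma exists_pull_stable : exists2 X, pull_inv X & forall u, ~~ bad_atom X u.
Proof.
suff pull n X : #|~: X| <= n -> pull_inv X ->
    exists2 X, pull_inv X & forall u, ~~ bad_atom X u.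
  exact: pull _ set0 (leqnn _) pull_inv0.
elim: n X => [|n IH] X card_le X_inv.
  exists X => // u; apply/negP => /and3P[uX _ _].
  by move: card_le; rewrite leqn0 => /eqP/cards0_eq/setP/(_ u); rewrite !inE uX.
case: (boolP [exists u, bad_atom X u]) => [/existsP[u]|]; last first.
  by rewrite negb_exists => /forallP; exists X.
case/and3P=> uX _ bad_u.
have [X_closed _ _] := X_inv.
apply: (IH (X :|: pblock K u)); last exact: pull_inv_step.
have : #|~: (X :|: pblock K u)| < #|~: X|.
  apply: proper_card; rewrite properE setCS subsetUl /=.
  apply/subsetPn; exists u; first by rewrite inE.
  by rewrite !inE mem_pblock_self ?orbT.
by move: card_le; lia.
Qed.

Local Open Scope ring_scope.

Lemma pull_cost_le X : pull_inv X -> eps <= 1 / 8 ->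
  (pair_cost p (same_block (label_partition (pull_label X))))%:R
    <= (1 + 8 * eps) * (pair_cost p sQ)%:R.
Proof.
case=> X_closed sep_le deg_le eps_le.
have -> : pair_cost p (same_block (label_partition (pull_label X)))
        = pair_cost p (fun x y => pull_label X x == pull_label X y).
  by apply: eq_sum2 => x y; rewrite /disagree same_block_label.
have := congr1 (fun n => n%:R : R) (pull_cost_eq X_closed); rewrite /= !natrD => cost_eq.
have := minus_touching_plus_cut_le X; rewrite -(ler_nat R) natrD => minus_cut_le.
have leaving_ge0 : (0 : R) <= (plus_leaving X)%:R by apply: ler0n.
have deg_le_cost : (plus_deg X)%:R <= 2 * (pair_cost p sQ)%:R :> R.
  have : eps * (plus_deg X)%:R <= 1 / 8 * (plus_deg X)%:R by apply: ler_wpM2r.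
  lra.
have : 4 * eps * (plus_deg X)%:R <= 4 * eps * (2 * (pair_cost p sQ)%:R) :> R.
  by apply: ler_wpM2l; rewrite ?mulr_ge0.
lra.
Qed.

Lemma pull_partition_coarsens X : block_closed K X ->
  forall A, A \in K -> exists2 B, B \in label_partition (pull_label X) & A \subset B.
Proof.
move=> X_closed A AK.
have [x xA] : exists x, x \in A.
  by apply/set0Pn; apply: contraTneq AK => ->; case/and3P: K_part.
exists [set y | pull_label X y == pull_label X x]; first exact: imset_f.
rewrite -(def_pblock (partition_trivIset K_part) AK xA).
apply/subsetP => y; rewrite -same_blockE // inE.
by move/(pull_label_same_block X_closed)->.
Qed.

Lemma pull_partition_stable X : block_closed K X -> (forall u, ~~ bad_atom X u) ->
  forall u C, C \in label_partition (pull_label X) -> pblock K u \proper C ->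
  weight_condition u C.
Proof.
move=> X_closed stable u C C_in prop_uC.
have [lab_part lab_block] := label_partitionP (pull_label X).
have uC : u \in C by apply: (subsetP (proper_sub prop_uC)); apply: mem_pblock_self.
have CE : C = pull_block X u.
  by rewrite -(def_pblock (partition_trivIset lab_part) C_in uC) lab_block.
rewrite CE in prop_uC *; case uX: (u \in X); last first.
  by have := stable u; rewrite /bad_atom uX prop_uC /= negbK.
suff : pull_block X u = pblock K u by move=> E; rewrite E properxx in prop_uC.
apply/setP => y; rewrite inE pull_label_eq uX -same_blockE // same_block_sym.
case yX: (y \in X) => //=.
by apply/esym/negbTE; apply: contraFN yX; apply: X_closed.
Qed.

End PullAtoms.

Section MarkedAtoms.
Variables (V : finType) (plus : rel V).
Hypothesis plus_sym : symmetric plus.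
Variable Cl : {set {set V}}.
Hypothesis Cl_part : clustering Cl.

Local Notation M := (marked plus Cl).
Local Notation K := (atoms plus Cl).
Local Notation plusK := (mod_plus plus K).

Let Cl_triv : trivIset Cl. Proof. by case/and3P: Cl_part. Qed.

Lemma mem_marked C u : C \in Cl -> u \in C ->
  (u \in M) = (1 < #|C|) && (marked_ind plus C u || fully_marked plus C).
Proof.
move=> CCl uC; rewrite inE; apply/existsP/idP => [[C']|uM]; last first.
  by exists C; rewrite CCl uC /= andbT.
rewrite -!andbA => /and4P[C'Cl c1 uC' marked_u].
have <- : C' = C by rewrite -(def_pblock Cl_triv CCl uC) (def_pblock Cl_triv C'Cl uC').
by rewrite c1.
Qed.

Definition atom_of v : {set V} := if v \in M then [set v] else pblock Cl v :\: M.

Lemma mem_atom_of v : v \in atom_of v.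
Proof.
by rewrite /atom_of; case: ifP => vM; rewrite ?set11 // in_setD vM mem_pblock_self.
Qed.

Lemma atom_of_eq v w : w \in atom_of v -> atom_of w = atom_of v.
Proof.
rewrite /atom_of; case: ifP => vM; first by move/set1P->; rewrite vM.
by rewrite in_setD => /andP[/negbTE-> /(same_pblock Cl_triv)->].
Qed.

Lemma atomsE : K = [set atom_of v | v in V].
Proof.
apply/setP => B; apply/idP/imsetP => [|[v _ ->]].
  rewrite in_setU in_setD1 => /orP[/imsetP[v vM ->]|/andP[B0 /imsetP[C CCl EB]]].
    by exists v; rewrite // /atom_of vM.
  have [v] := set0Pn _ B0; rewrite EB in_setD => /andP[vM vC].
  by exists v; rewrite // /atom_of (negbTE vM) (def_pblock Cl_triv CCl vC).
rewrite /atoms /atom_of in_setU in_setD1; case: ifP => vM; first by rewrite imset_f.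
apply/orP; right; apply/andP; split; last exact/imset_f/pblock_in_partition.
by apply/set0Pn; exists v; rewrite in_setD vM mem_pblock_self.
Qed.

Lemma atoms_partition : partition K [set: V].
Proof. by rewrite atomsE; case: (imset_block_partition mem_atom_of atom_of_eq). Qed.

Lemma pblock_atoms v : pblock K v = atom_of v.
Proof. by rewrite atomsE; case: (imset_block_partition mem_atom_of atom_of_eq). Qed.

Lemma mod_plus_sym : symmetric plusK.
Proof.
move=> x y; rewrite /mod_plus plus_sym; congr (_ || _).
by apply/existsP/existsP => -[A /and3P[AK xA yA]]; exists A; rewrite AK xA yA.
Qed.

Lemma mod_plus_clique x y : same_block K x y -> x != y -> plusK x y.
Proof.
move=> sKxy _; apply/orP; right; apply/existsP; exists (pblock K x).
rewrite pblock_in_partition ?atoms_partition // mem_pblock_self ?atoms_partition //=.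
by rewrite -same_blockE ?atoms_partition.
Qed.

Lemma mod_plus_out x z : z \notin pblock K x -> plusK x z = plus x z.
Proof.
move=> zx; rewrite /mod_plus; case: (plus x z) => //=.
apply/negbTE/existsP => -[A /and3P[AK xA zA]].
by move: zx; rewrite (def_pblock (partition_trivIset atoms_partition) AK xA) zA.
Qed.

Lemma mod_plus_differs_sub x y (C : {set V}) : same_block K x y ->
  [set z | (z \notin pblock K x) && (plusK x z != plusK y z)]
    \subset symdiff (Nplus plus x) C :|: symdiff (Nplus plus y) C.
Proof.
move=> sKxy; apply/subsetP => z; rewrite inE => /andP[zx].
have zy : z \notin pblock K y by rewrite -(eqP sKxy).
have [z_ne_x z_ne_y] : z != x /\ z != y.
  by split; [move: zx | move: zy]; apply: contraNneq => ->;
    exact: mem_pblock_self atoms_partition _.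
rewrite !mod_plus_out // /symdiff !inE (negbTE z_ne_x) (negbTE z_ne_y) /=.
by case: (plus x z); case: (plus y z); case: (z \in C).
Qed.

Lemma card_marked_le C : C \in Cl -> ~~ fully_marked plus C ->
  #|C :&: M| <= #|[set u in C | marked_ind plus C u]|.
Proof.
move=> CCl not_full; apply/subset_leq_card/subsetP => u; rewrite in_setI => /andP[uC].
by rewrite (mem_marked CCl uC) (negbTE not_full) orbF inE uC => /andP[].
Qed.

Lemma atom_size_arith (c a m mi dx dy z : R) :
  (0 < c)%R -> (m + a = c)%R -> (m <= mi)%R -> (mi < beta * c / 3)%R ->
  (dx <= beta / 2 * c)%R -> (dy <= beta / 2 * c)%R -> (z <= dx + dy)%R -> (2 * z < a)%R.
Proof. by rewrite /beta => *; lra. Qed.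

Lemma atoms_uniform x y : same_block K x y ->
  2 * #|[set z | (z \notin pblock K x) && (plusK x z != plusK y z)]| < #|pblock K x|.
Proof.
move=> sKxy; set Z := [set z | _]; have [yx|neq_xy] := eqVneq x y.
  rewrite (_ : Z = set0) ?cards0 ?muln0; last first.
    by apply/setP => z; rewrite !inE yx eqxx andbF.
  by apply/card_gt0P; exists x; exact: mem_pblock_self atoms_partition _.
have yx : y \in atom_of x by rewrite -pblock_atoms -same_blockE ?atoms_partition.
set C := pblock Cl x.
have CCl : C \in Cl := pblock_in_partition Cl_part x.
have xC : x \in C := mem_pblock_self Cl_part x.
have xM : x \notin M.
  by apply: contra neq_xy => xM; move: yx; rewrite /atom_of xM => /set1P->.
have atomE : pblock K x = C :\: M by rewrite pblock_atoms /atom_of (negbTE xM).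
have /andP[yM yC] : (y \notin M) && (y \in C) by rewrite -in_setD -atomE pblock_atoms.
have c1 : 1 < #|C| by apply/card_gt1P; exists x, y.
move: xM yM; rewrite !(mem_marked CCl) // c1 /= !negb_or => /andP[xi not_full] /andP[yi _].
have Z_le : #|Z| <= #|symdiff (Nplus plus x) C| + #|symdiff (Nplus plus y) C|.
  exact: leq_trans (subset_leq_card (mod_plus_differs_sub C sKxy)) (leq_card_setU _ _).
have M_le := card_marked_le CCl not_full.
have CE := congr1 (fun n => n%:R : R)%R (cardsID M C).
rewrite -(ler_nat R) natrD in Z_le; rewrite -(ler_nat R) in M_le.
rewrite -(ltr_nat R) in c1; rewrite /= natrD in CE.
move: xi yi not_full; rewrite /marked_ind /fully_marked xC yC /= -!real_leNgt ?num_real //.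
rewrite -real_ltNge ?num_real // => xi yi not_full.
rewrite atomE -(ltr_nat R) natrM.
by apply: (atom_size_arith _ CE M_le not_full xi yi Z_le); apply: lt_trans c1.
Qed.

End MarkedAtoms.

Local Open Scope ring_scope.

Theorem lemma9 :
  exists (c : R), 0 < c /\ exists (eps0 : R), 0 < eps0 /\
  forall (eps : R), 0 < eps -> eps < eps0 ->
  forall (V : finType) (plus : rel V), symmetric plus ->
  forall (Cl : {set {set V}}), clustering Cl ->
  (cc_cost plus Cl <= 3 * cc_opt plus)%N ->
  let K := atoms plus Cl in
  let plusK := mod_plus plus K in
  exists C1 : {set {set V}},
    [/\ clustering C1,
        (cc_cost plusK C1)%:R <= (1 + c * eps) * (cc_opt plusK)%:R,
        (forall A, A \in K -> exists2 B, B \in C1 & A \subset B) &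
        (forall (u : V) (C : {set V}), C \in C1 -> pblock K u \proper C ->
           (#|C|%:R / 2 + eps * wtot plusK K u < wset plusK K u C))].
Proof.
exists 8; split; first lra.
exists (1 / 8); split; first lra.
move=> eps eps_gt0 eps_lt V plus plus_sym Cl Cl_part _ K plusK.
have K_part : partition K [set: V] := atoms_partition plus Cl_part.
have plusK_sym : symmetric plusK := mod_plus_sym plus_sym Cl.
have K_clique := mod_plus_clique (plus := plus) Cl_part.
have [Q Q_part Q_opt] := exists_optimal_clustering plusK.
have K_uniform := atoms_uniform (plus := plus) Cl_part.
have Q_coarser := optimal_no_split plusK_sym K_part K_clique K_uniform Q_opt.
have [X X_inv X_stable] := exists_pull_stable plusK_sym K_part K_clique Q_coarser (ltW eps_gt0).
have [X_closed _ _] := X_inv.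
exists (label_partition (pull_label K Q X)); split.
- exact: (label_partitionP _).1.
- rewrite (cc_opt_optimal plusK_sym Q_part Q_opt).
  have := pull_cost_le K_clique Q_coarser (ltW eps_gt0) X_inv (ltW eps_lt).
  by rewrite -!cc_cost_pair_cost // -!mul2n !natrM; lra.
- by move=> A; apply: pull_partition_coarsens.
- by move=> u C; apply: pull_partition_stable.
Qed.
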